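(* Fix $V_{\sf P}\ge 0$ and $\delta\in[0,1)$, and let $\rho=\frac{1}{1+e+e^{V_{\sf P}+1}}$. Then, as $p\to0$, $$\lim_{p\to0}{\sf Eng}({\sf PEAR})=\frac{1}{1-\delta\rho}\cdot\frac{e^{V_{\sf P}}+e^{-1}}{1+e^{V_{\sf P}}+e^{-1}}+\frac{1}{1-\delta}\cdot\frac{\delta(1-\rho)}{1-\delta\rho}\cdot\frac{2e^{V_{\sf P}}}{1+2e^{V_{\sf P}}},$$ $$\lim_{p\to0}{\sf Util}({\sf PEAR})=\frac{1}{1-\delta}+\frac{1}{1-\delta\rho}\ln\!\left(1+e^{-1}+e^{V_{\sf P}}\right)+\frac{1}{1-\delta}\cdot\frac{\delta(1-\rho)}{1-\delta\rho}\ln\!\left(1+2e^{V_{\sf P}}\right).$$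
   Context: Model. Time $t=0,1,2,\dots$, discount factor $\delta\in[0,1)$. There are two item types, popular ${\sf P}$ and niche ${\sf N}$, each with infinitely many items. At each time $t$ the platform recommends a set $\pi_t$ of two fresh items, each of a chosen type. The user's utility for an item $i$ of type $\tau(i)$ is $u_i=V_{\tau(i)}+\epsilon_i$, and for the outside option $\emptyset$ it is $u_\emptyset=\epsilon_\emptyset$. All noise terms are i.i.d. Gumbel with scale $1$ and mean $0$ (CDF $\exp(-\exp(-(x+\gamma)))$, $\gamma$ the Euler–Mascheroni constant). The user chooses $c_t=\arg\max_{j\in\pi_t\cup\{\emptyset\}}u_j$. $V_{\sf P}$ is a known constant; $V_{\sf N}$ is drawn once for the user, fixed over time, independent of the noise, with $\mathbb P(V_{\sf N}=(1-p)/p)=p$, $\mathbb P(V_{\sf N}=-1)=1-p$, $p\in(0,1)$. ${\sf Eng}(\pi)=\sum_{t\ge0}\delta^t\mathbb P(c_t\ne\emptyset)$, ${\sf Util}(\pi)=\sum_{t\ge0}\delta^t\mathbb E[\max_{j\in\pi_t\cup\{\emptyset\}}u_j]$ (expectations also over $V_{\sf N}$). Policy ${\sf PEAR}$: let $\rho_1=\frac{e^{(1-p)/p}}{1+e^{V_{\sf P}}+e^{(1-p)/p}}$, $\rho_2=\frac{e^{-1}}{1+e^{V_{\sf P}}+e^{-1}}$. Maintain counters $S,F$ (initially $0$) and $p_0=p$. At each time $t$: if $p_t\ge p$, recommend one popular and one niche item; if the chosen item is the niche item increment $S$, otherwise (popular item or outside option chosen) increment $F$. If $p_t<p$, recommend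 two popular items (counters unchanged). Then set $p_{t+1}=\left(1+\frac{1-p}{p}\cdot\frac{\rho_2^S(1-\rho_2)^F}{\rho_1^S(1-\rho_1)^F}\right)^{-1}$. *)

From Stdlib Require Import Reals Lra.
From Coquelicot Require Import Coquelicot.
Open Scope R_scope.

Definition euler_gamma : R :=
  real (Lim_seq (fun n => sum_f_R0 (fun k => / INR (S k)) n - ln (INR (S n)))).

(* Standard Gumbel noise with scale 1 and mean 0:
   CDF exp(-exp(-(x+gamma))), density its derivative. *)
Definition gumbel_cdf (x : R) : R := exp (- exp (- (x + euler_gamma))).
Definition gumbel_pdf (x : R) : R := exp (- (x + euler_gamma)) * gumbel_cdf x.

Definition integral_R (f : R -> R) : R :=
  RInt_gen f (Rbar_locally m_infty) (Rbar_locally p_infty).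

(* Three options with utilities u_j = a_j + eps_j, eps_j iid Gumbel.
   win3 a b c = P(option with mean a has the maximal utility)
              = int g(x-a) G(x-b) G(x-c) dx. *)
Definition win3 (a b c : R) : R :=
  integral_R (fun x => gumbel_pdf (x - a) * gumbel_cdf (x - b) * gumbel_cdf (x - c)).

(* E[max(a+eps_1, b+eps_2, c+eps_3)] = int x * (density of the max) dx. *)
Definition emax3 (a b c : R) : R :=
  integral_R (fun x => x *
    (gumbel_pdf (x - a) * gumbel_cdf (x - b) * gumbel_cdf (x - c)
   + gumbel_pdf (x - b) * gumbel_cdf (x - a) * gumbel_cdf (x - c)
   + gumbel_pdf (x - c) * gumbel_cdf (x - a) * gumbel_cdf (x - b))).

Definition rho1 (p VP : R) : R :=
  exp ((1 - p) / p) / (1 + exp VP + exp ((1 - p) / p)).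
Definition rho2 (VP : R) : R := exp (-1) / (1 + exp VP + exp (-1)).

(* posterior p_t as a function of the counters S, F *)
Definition pear_post (p VP : R) (S F : nat) : R :=
  / (1 + (1 - p) / p *
         ((rho2 VP ^ S * (1 - rho2 VP) ^ F) / (rho1 p VP ^ S * (1 - rho1 p VP) ^ F))).

(* explore (recommend one popular + one niche) iff p_t >= p *)
Definition pear_explore (p VP : R) (S F : nat) : bool :=
  if Rle_dec p (pear_post p VP S F) then true else false.

(* Given the realised niche value vN, the counters (S,F) evolve as a Markov
   chain (fresh items and iid noise each period).  pear_exp t f S F is the
   expectation of f(S_t', F_t') after t more periods started from (S,F).
   Menu when exploring: outside option (mean 0), popular (VP), niche (vN). *)
Fixpoint pear_exp (p VP vN : R) (t : nat) (f : nat -> nat -> R) (S F : nat) : R :=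
  match t with
  | O => f S F
  | Datatypes.S t' =>
      if pear_explore p VP S F then
        win3 vN 0 VP * pear_exp p VP vN t' f (Datatypes.S S) F
        + (win3 VP 0 vN + win3 0 VP vN) * pear_exp p VP vN t' f S (Datatypes.S F)
      else pear_exp p VP vN t' f S F
  end.

(* P(c_t <> outside) in state (S,F) *)
Definition eng_reward (p VP vN : R) (S F : nat) : R :=
  if pear_explore p VP S F then win3 VP 0 vN + win3 vN 0 VP
  else win3 VP 0 VP + win3 VP 0 VP.

Definition util_reward (p VP vN : R) (S F : nat) : R :=
  if pear_explore p VP S F then emax3 0 VP vN else emax3 0 VP VP.

(* Expectation also over V_N: (1-p)/p w.p. p, -1 w.p. 1-p. *)
Definition pear_eng (VP delta p : R) : R :=
  Series (fun t => delta ^ t *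
    (p * pear_exp p VP ((1 - p) / p) t (eng_reward p VP ((1 - p) / p)) 0 0
     + (1 - p) * pear_exp p VP (-1) t (eng_reward p VP (-1)) 0 0)).

Definition pear_util (VP delta p : R) : R :=
  Series (fun t => delta ^ t *
    (p * pear_exp p VP ((1 - p) / p) t (util_reward p VP ((1 - p) / p)) 0 0
     + (1 - p) * pear_exp p VP (-1) t (util_reward p VP (-1)) 0 0)).

From Stdlib Require Import Reals Lra Lia.
From Coquelicot Require Import Coquelicot.
Open Scope R_scope.

(* Gumbel computations: the density of the winner among three Gumbel options
   is again a Gumbel density, shifted by the log-sum-exp of the means, so the
   winning probabilities are softmax weights and the expected maximum is
   ln (e^a + e^b + e^c).  For the latter one needs the mean of the Gumbel law,
   i.e. int_0^oo - ln t e^(-t) dt = gamma; it is obtained by comparing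
   int_A^B with H_n - ln n = int_0^n (1 - (1 - t/n)^n) / t dt - ln n.

   Dynamics of PEAR as p -> 0: the high type (probability p) is explored
   forever; it contributes O(p) to engagement but about (1 - p) / p per step to
   utility, i.e. 1 / (1 - delta) in total.  Once p is small compared to
   rho^N (1 - rho), a single failure among the first N steps drives the
   posterior of the low type below p, after which only popular items are
   shown.  So up to time N the low type earns rho^t E + (1 - rho^t) X, and
   summing the discounted series gives the limits; the tail beyond N costs
   O(sqrt delta ^ N). *)

(* Coquelicot states integrand equalities in a normed-module carrier; [ring]
   needs them at type [R]. *)
Ltac R_eq := lazymatch goal with |- ?a = ?b => change (a = b :> R) end.

Lemma ln_le_sub_1 x : 0 < x -> ln x <= x - 1.
Proof. intros Hx. generalize (exp_ineq1_le (ln x)). rewrite exp_ln; lra. Qed.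

Lemma ln_ge_0 x : 1 <= x -> 0 <= ln x.
Proof. intros. rewrite <- ln_1. apply ln_le; lra. Qed.

Lemma exp_INR_mul (n : nat) x : exp (INR n * x) = exp x ^ n.
Proof.
  induction n as [|n IH]; simpl pow.
  - rewrite Rmult_0_l, exp_0; ring.
  - rewrite S_INR. replace ((INR n + 1) * x) with (x + INR n * x) by ring.
    rewrite exp_plus, IH; ring.
Qed.

Lemma pow_le_1 x n : 0 <= x <= 1 -> x ^ n <= 1.
Proof. intros. rewrite <- (pow1 n). apply pow_incr; lra. Qed.

Lemma pow_le_pow_of_le_1 r m n : 0 <= r <= 1 -> (m <= n)%nat -> r ^ n <= r ^ m.
Proof.
  intros Hr Hmn. replace n with (m + (n - m))%nat by lia. rewrite pow_add.
  rewrite <- (Rmult_1_r (r ^ m)) at 2.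
  apply Rmult_le_compat_l; [apply pow_le; lra | apply pow_le_1; lra].
Qed.

Lemma one_sub_pow_le x n : 0 <= x <= 1 -> 0 <= 1 - x ^ n <= INR n * (1 - x).
Proof.
  intros Hx. induction n as [|n IH]; simpl pow; [simpl; lra|].
  rewrite S_INR.
  assert (0 <= x ^ n <= 1) by (split; [apply pow_le | apply pow_le_1]; lra).
  split; nra.
Qed.

Lemma mul_exp_neg_le_1 t : t * exp (- t) <= 1.
Proof.
  rewrite exp_Ropp. generalize (exp_ineq1_le t) (exp_pos t); intros.
  apply (Rmult_le_reg_r (exp t)); auto.
  rewrite Rmult_assoc, Rinv_l by lra. lra.
Qed.

Lemma exp_neg_bounds t : 0 < t -> 0 <= 1 - exp (- t) <= t /\ 0 < exp (- t) <= 1 / t.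
Proof.
  intros Ht. generalize (exp_ineq1_le (- t)) (exp_pos (- t)); intros.
  assert (exp (- t) <= 1) by (rewrite <- exp_0; left; apply exp_increasing; lra).
  split; [lra | split; auto].
  rewrite exp_Ropp. generalize (exp_ineq1_le t) (exp_pos t); intros.
  unfold Rdiv. rewrite Rmult_1_l. apply Rinv_le_contravar; lra.
Qed.

Lemma sqr_le_4_exp x : 0 <= x -> x * x <= 4 * exp x.
Proof.
  intros Hx. replace x with (x / 2 + x / 2) at 3 by field. rewrite exp_plus.
  generalize (exp_ineq1_le (x / 2)). nra.
Qed.

Lemma ln_mul_exp_neg_le B : 1 <= B -> 0 <= ln B * exp (- B) <= 4 / B.
Proof.
  intros HB. assert (0 <= ln B) by (apply ln_ge_0; lra).
  assert (ln B <= B) by (generalize (ln_le_sub_1 B ltac:(lra)); lra).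
  generalize (sqr_le_4_exp B ltac:(lra)) (exp_pos B); intros.
  rewrite exp_Ropp. split.
  - apply Rmult_le_pos; auto. left; apply Rinv_0_lt_compat; auto.
  - apply Rle_trans with (B * / exp B).
    + apply Rmult_le_compat_r; auto. left; apply Rinv_0_lt_compat; auto.
    + apply (Rmult_le_reg_r (exp B * B)); [nra|].
      replace (B * / exp B * (exp B * B)) with (B * B) by (field; lra).
      replace (4 / B * (exp B * B)) with (4 * exp B) by (field; lra). auto.
Qed.

Lemma neg_ln_mul_le_2_sqrt A : 0 < A < 1 -> 0 <= - ln A * A <= 2 * sqrt A.
Proof.
  intros HA. assert (Hu : 0 < sqrt A) by (apply sqrt_lt_R0; lra).
  assert (HAu : A = sqrt A * sqrt A) by (rewrite sqrt_sqrt; lra).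
  assert (ln A < 0) by (rewrite <- ln_1; apply ln_increasing; lra).
  split; [nra|].
  rewrite HAu at 1 2. rewrite ln_mult by auto.
  assert (Hinv := ln_le_sub_1 (/ sqrt A) (Rinv_0_lt_compat _ Hu)).
  rewrite ln_Rinv in Hinv by auto.
  assert (/ sqrt A * sqrt A = 1) by (field; lra).
  nra.
Qed.

Lemma sqrt_lt_1_of_lt_1 d : 0 <= d < 1 -> 0 <= sqrt d < 1.
Proof. intros. split; [apply sqrt_pos|]. rewrite <- sqrt_1. apply sqrt_lt_1_alt. lra. Qed.

(* Instances at [R] of Coquelicot lemmas stated for a general normed module,
   whose generic forms do not unify with goals about [R] under [apply] or
   [rewrite]. *)
Lemma ex_derive_continuous_R (f : R -> R) x : ex_derive f x -> continuous f x.
Proof. exact (ex_derive_continuous f x). Qed.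

Lemma ex_RInt_of_ex_derive (f : R -> R) a b :
  (forall z, Rmin a b <= z <= Rmax a b -> ex_derive f z) -> ex_RInt f a b.
Proof.
  intros H. apply (ex_RInt_continuous f a b). intros z Hz.
  apply ex_derive_continuous_R, H, Hz.
Qed.

Lemma ex_RInt_of_ex_derive_pos (f : R -> R) a b : 0 < a -> 0 < b ->
  (forall t, 0 < t -> ex_derive f t) -> ex_RInt f a b.
Proof.
  intros Ha Hb H. apply ex_RInt_of_ex_derive. intros z Hz. apply H.
  assert (0 < Rmin a b) by (apply Rmin_glb_lt; auto). lra.
Qed.

Lemma RInt_exp_neg a b : RInt (fun t => exp (- t)) a b = exp (- a) - exp (- b).
Proof.
  apply is_RInt_unique.
  replace (exp (- a) - exp (- b)) with (- exp (- b) - - exp (- a)) by ring.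
  apply (is_RInt_derive (fun t => - exp (- t))).
  - intros x _. auto_derive; auto. ring.
  - intros x _. apply ex_derive_continuous_R. auto_derive. auto.
Qed.

Lemma is_derive_sum_f_R0 (g : nat -> R -> R) (dg : nat -> R) t N :
  (forall k, is_derive (g k) t (dg k)) ->
  is_derive (fun x => sum_f_R0 (fun k => g k x) N) t (sum_f_R0 dg N).
Proof.
  intros H. induction N as [|N IH]; simpl; [apply H|].
  apply (is_derive_plus (fun x => sum_f_R0 (fun k => g k x) N) (g (S N))); auto.
Qed.

Lemma continuous_sum_f_R0 (g : nat -> R -> R) t N :
  (forall k, continuous (g k) t) -> continuous (fun x => sum_f_R0 (fun k => g k x) N) t.
Proof.
  intros H. induction N as [|N IH]; simpl; [apply H|].
  apply (continuous_plus (fun x => sum_f_R0 (fun k => g k x) N) (g (S N))); auto.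
Qed.

Lemma sum_f_R0_bounds (g : nat -> R) N : (forall k, 0 <= g k <= 1) ->
  0 <= sum_f_R0 g N <= INR (S N).
Proof.
  intros H. induction N as [|N IH]; simpl sum_f_R0; [specialize (H 0%nat); simpl; lra|].
  specialize (H (S N)). rewrite (S_INR (S N)). lra.
Qed.

Lemma RInt_plus_R (f g : R -> R) a b : ex_RInt f a b -> ex_RInt g a b ->
  RInt (fun x => f x + g x) a b = RInt f a b + RInt g a b.
Proof. exact (RInt_plus f g a b). Qed.

Lemma RInt_minus_R (f g : R -> R) a b : ex_RInt f a b -> ex_RInt g a b ->
  RInt (fun x => f x - g x) a b = RInt f a b - RInt g a b.
Proof. exact (RInt_minus f g a b). Qed.

Lemma RInt_Chasles_R (f : R -> R) a b c : ex_RInt f a b -> ex_RInt f b c ->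
  RInt f a b + RInt f b c = RInt f a c.
Proof. exact (RInt_Chasles f a b c). Qed.

Lemma is_series_geom_pos q : 0 <= q < 1 -> is_series (fun n => q ^ n) (/ (1 - q)).
Proof. intros. apply is_series_geom. rewrite Rabs_pos_eq; lra. Qed.

Lemma is_series_geom_scal c q : 0 <= q < 1 -> is_series (fun n => c * q ^ n) (c / (1 - q)).
Proof. intros Hq. exact (is_series_scal_l _ _ _ (is_series_geom_pos q Hq)). Qed.

Lemma ex_series_discounted d (y : nat -> R) M : 0 <= d < 1 -> (forall t, Rabs (y t) <= M) ->
  ex_series (fun t => d ^ t * y t).
Proof.
  intros Hd Hy. apply (@ex_series_le R_AbsRing R_CompleteNormedModule _ (fun t => M * d ^ t)).
  - intros n. change (Rabs (d ^ n * y n) <= M * d ^ n).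
    rewrite Rabs_mult, Rabs_pos_eq by (apply pow_le; lra). rewrite Rmult_comm.
    apply Rmult_le_compat_r; [apply pow_le; lra | auto].
  - exists (M / (1 - d)). apply is_series_geom_scal; auto.
Qed.

Lemma Series_abs_le (y b : nat -> R) B : (forall t, Rabs (y t) <= b t) -> is_series b B ->
  Rabs (Series y) <= B.
Proof.
  intros H Hb.
  assert (Eb : ex_series b) by (exists B; auto).
  assert (Ey : ex_series (fun t => Rabs (y t))).
  { apply (@ex_series_le R_AbsRing R_CompleteNormedModule _ b); auto.
    intros n. change (Rabs (Rabs (y n)) <= b n). rewrite Rabs_Rabsolu. auto. }
  eapply Rle_trans; [apply Series_Rabs; auto|].
  rewrite <- (is_series_unique b B Hb). apply Series_le; auto.
  intros n; split; [apply Rabs_pos | auto].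
Qed.

Lemma Series_discounted_le d (y : nat -> R) M : 0 <= d < 1 -> (forall t, Rabs (y t) <= M) ->
  Rabs (Series (fun t => d ^ t * y t)) <= M / (1 - d).
Proof.
  intros Hd Hy. apply (Series_abs_le _ (fun t => M * d ^ t)); [|apply is_series_geom_scal; auto].
  intros t. rewrite Rabs_mult, Rabs_pos_eq by (apply pow_le; lra). rewrite Rmult_comm.
  apply Rmult_le_compat_r; [apply pow_le; lra | auto].
Qed.

(* The tail beyond [N] is bounded through [d ^ t <= sqrt d ^ N * sqrt d ^ t]. *)
Lemma Series_discounted_close d (y z : nat -> R) N c M : 0 <= d < 1 ->
  (forall t, Rabs (y t) <= M /\ Rabs (z t) <= M) ->
  (forall t, (t <= N)%nat -> Rabs (y t - z t) <= c) ->
  Rabs (Series (fun t => d ^ t * y t) - Series (fun t => d ^ t * z t))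
    <= c / (1 - d) + 2 * M * sqrt d ^ N / (1 - sqrt d).
Proof.
  intros Hd Hb Hc. set (s := sqrt d).
  assert (Hs : 0 <= s < 1) by (apply sqrt_lt_1_of_lt_1; auto).
  assert (Hss : s * s = d) by (unfold s; apply sqrt_sqrt; lra).
  assert (HM : 0 <= M) by (destruct (Hb 0%nat) as [H _]; generalize (Rabs_pos (y 0%nat)); lra).
  assert (Hc0 : 0 <= c)
    by (generalize (Hc 0%nat (Nat.le_0_l N)) (Rabs_pos (y 0%nat - z 0%nat)); lra).
  rewrite <- Series_minus by (apply (ex_series_discounted d _ M); auto; apply Hb).
  apply (Series_abs_le _ (fun t => c * d ^ t + 2 * M * s ^ N * s ^ t)).
  - intros t. replace (d ^ t * y t - d ^ t * z t) with (d ^ t * (y t - z t)) by ring.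
    rewrite Rabs_mult, Rabs_pos_eq by (apply pow_le; lra).
    assert (0 <= s ^ t) by (apply pow_le; lra). assert (0 <= s ^ N) by (apply pow_le; lra).
    assert (0 <= d ^ t) by (apply pow_le; lra).
    assert (0 <= 2 * M * s ^ N * s ^ t) by (repeat apply Rmult_le_pos; lra).
    assert (0 <= c * d ^ t) by (apply Rmult_le_pos; lra).
    destruct (Compare_dec.le_lt_dec t N) as [HtN|HtN].
    + assert (d ^ t * Rabs (y t - z t) <= d ^ t * c) by (apply Rmult_le_compat_l; auto). lra.
    + assert (Hyz : Rabs (y t - z t) <= 2 * M).
      { destruct (Hb t). unfold Rminus. eapply Rle_trans; [apply Rabs_triang|].
        rewrite Rabs_Ropp. lra. }
      assert (Hdt : d ^ t <= s ^ N * s ^ t).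
      { rewrite <- Hss, Rpow_mult_distr. apply Rmult_le_compat_r; auto.
        apply pow_le_pow_of_le_1; [lra | lia]. }
      apply Rle_trans with (d ^ t * (2 * M)); [apply Rmult_le_compat_l; auto|].
      apply Rle_trans with (s ^ N * s ^ t * (2 * M)); [apply Rmult_le_compat_r|]; lra.
  - apply (is_series_plus _ _ _ _ (is_series_geom_scal c d Hd)).
    apply is_series_geom_scal; auto.
Qed.

Lemma Series_discounted_mix d (y z : nat -> R) p My Mz : 0 <= d < 1 ->
  (forall t, Rabs (y t) <= My) -> (forall t, Rabs (z t) <= Mz) ->
  Series (fun t => d ^ t * (p * y t + (1 - p) * z t)) =
  p * Series (fun t => d ^ t * y t) + (1 - p) * Series (fun t => d ^ t * z t).
Proof.
  intros Hd Hy Hz.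
  destruct (ex_series_discounted d y My Hd Hy) as [ly Hly].
  destruct (ex_series_discounted d z Mz Hd Hz) as [lz Hlz].
  rewrite (is_series_unique _ _ Hly), (is_series_unique _ _ Hlz).
  apply is_series_unique.
  apply (is_series_ext (fun t => p * (d ^ t * y t) + (1 - p) * (d ^ t * z t)));
    [intros; R_eq; ring|].
  exact (is_series_plus _ _ _ _ (is_series_scal_l _ _ _ Hly) (is_series_scal_l _ _ _ Hlz)).
Qed.

(* Expected reward at time [t] of a chain that stops at the first failure, each
   step succeeding with probability [r]: [E] before stopping, [X] after. *)
Definition stop_mix (r E X : R) (t : nat) := r ^ t * E + (1 - r ^ t) * X.

Lemma stop_mix_bounds r E X m M t : 0 <= r <= 1 -> m <= E <= M -> m <= X <= M ->
  m <= stop_mix r E X t <= M.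
Proof.
  intros Hr HE HX. unfold stop_mix.
  assert (0 <= r ^ t <= 1) by (split; [apply pow_le | apply pow_le_1]; lra).
  split; nra.
Qed.

Lemma is_series_stop_mix r d E X : 0 <= r <= 1 -> 0 <= d < 1 ->
  is_series (fun t => d ^ t * stop_mix r E X t)
    (1 / (1 - d * r) * E + 1 / (1 - d) * (d * (1 - r) / (1 - d * r)) * X).
Proof.
  intros Hr Hd. unfold stop_mix.
  assert (Hdr : 0 <= d * r < 1) by (split; nra).
  apply (is_series_ext (fun t => E * (d * r) ^ t + (X * d ^ t + (- X) * (d * r) ^ t))).
  { intros t. R_eq. rewrite Rpow_mult_distr. ring. }
  replace (1 / (1 - d * r) * E + 1 / (1 - d) * (d * (1 - r) / (1 - d * r)) * X)
    with (E / (1 - d * r) + (X / (1 - d) + - X / (1 - d * r))) by (field; lra).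
  apply (is_series_plus _ _ _ _ (is_series_geom_scal E _ Hdr)).
  exact (is_series_plus _ _ _ _ (is_series_geom_scal X _ Hd) (is_series_geom_scal (- X) _ Hdr)).
Qed.

(** * Euler's constant as an integral *)

Definition gamma_int A B := RInt (fun t => - ln t * exp (- t)) A B.

Lemma gamma_int_by_parts A B : 0 < A <= B ->
  gamma_int A B = RInt (fun t => (1 - exp (- t)) / t) A B
                  - (ln B * (1 - exp (- B)) - ln A * (1 - exp (- A))).
Proof.
  intros HAB.
  assert (HD : RInt (fun t => (1 - exp (- t)) / t + ln t * exp (- t)) A B =
               ln B * (1 - exp (- B)) - ln A * (1 - exp (- A))).
  { apply is_RInt_unique, (is_RInt_derive (fun t => ln t * (1 - exp (- t)))).
    - intros x Hx. rewrite Rmin_left, Rmax_right in Hx by lra.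
      auto_derive; [lra | field; lra].
    - intros x Hx. rewrite Rmin_left, Rmax_right in Hx by lra.
      apply ex_derive_continuous_R. auto_derive. repeat split; lra. }
  rewrite <- HD. unfold gamma_int. rewrite <- RInt_minus_R.
  - apply RInt_ext. intros x _. R_eq. ring.
  - apply ex_RInt_of_ex_derive_pos; try lra. intros t Ht. auto_derive. repeat split; lra.
  - apply ex_RInt_of_ex_derive_pos; try lra. intros t Ht. auto_derive. repeat split; lra.
Qed.

Section Truncated_exponential.

Variable n : nat.
Hypothesis n_pos : (1 <= n)%nat.

Definition trunc_exp t := (1 - t / INR n) ^ n.

(* [(1 - trunc_exp t) / t], written as a polynomial so that it is continuous
   at [0]; [harm_primitive] is a primitive of it. *)
Definition harm_density t := sum_f_R0 (fun k => (1 - t / INR n) ^ k) (pred n) / INR n.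
Definition harm_primitive t :=
  sum_f_R0 (fun k => - ((1 - t / INR n) ^ S k / INR (S k))) (pred n).
Definition harmonic := sum_f_R0 (fun k => / INR (S k)) (pred n).

Lemma one_sub_div_bounds t : 0 <= t <= INR n -> 0 <= 1 - t / INR n <= 1.
Proof.
  intros Ht. pose proof (lt_0_INR n n_pos) as Hn.
  assert (0 <= t / INR n) by (apply Rdiv_le_0_compat; lra).
  assert (t / INR n <= 1).
  { apply (Rmult_le_reg_r (INR n)); auto. unfold Rdiv.
    rewrite Rmult_assoc, Rinv_l; lra. }
  lra.
Qed.

Lemma trunc_exp_bounds t : 0 <= t <= INR n ->
  0 <= exp (- t) - trunc_exp t <= t * t * exp (- t) / INR n.
Proof.
  intros Ht. pose proof (lt_0_INR n n_pos) as Hn.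
  set (s := t / INR n).
  assert (Hs : 0 <= s <= 1) by (pose proof (one_sub_div_bounds t Ht); unfold s; lra).
  assert (Hts : t = INR n * s) by (unfold s; field; lra).
  (* trunc_exp t = exp (-t) * x ^ n with x := exp s * (1 - s) in [1 - s^2, 1] *)
  set (x := exp s * (1 - s)).
  assert (Hx1 : x <= 1).
  { unfold x. generalize (exp_ineq1_le (- s)) (exp_pos s). rewrite exp_Ropp. intros.
    apply (Rmult_le_reg_r (/ exp s)); [apply Rinv_0_lt_compat; auto|].
    replace (exp s * (1 - s) * / exp s) with (1 - s) by (field; lra). lra. }
  assert (Hx0 : 1 - s * s <= x) by (unfold x; generalize (exp_ineq1_le s); nra).
  assert (Hpow : trunc_exp t = exp (- t) * x ^ n).
  { unfold trunc_exp, x. fold s.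
    rewrite Rpow_mult_distr, <- exp_INR_mul, <- Hts, <- Rmult_assoc, <- exp_plus.
    replace (- t + t) with 0 by ring. rewrite exp_0; ring. }
  rewrite Hpow.
  destruct (one_sub_pow_le x n) as [H1 H2]; [nra|].
  generalize (exp_pos (- t)); intro He.
  split; [nra|].
  replace (exp (- t) - exp (- t) * x ^ n) with (exp (- t) * (1 - x ^ n)) by ring.
  apply Rle_trans with (exp (- t) * (INR n * (s * s))).
  - apply Rmult_le_compat_l; nra.
  - right. rewrite Hts. field. lra.
Qed.

Lemma is_derive_harm_primitive t : is_derive harm_primitive t (harm_density t).
Proof.
  pose proof (lt_0_INR n n_pos) as Hn. unfold harm_primitive, harm_density.
  assert (E : sum_f_R0 (fun k => (1 - t / INR n) ^ k) (pred n) / INR n =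
              sum_f_R0 (fun k => (1 - t / INR n) ^ k / INR n) (pred n)).
  { induction (pred n) as [|j IH]; simpl; [field; lra|]. rewrite <- IH. field; lra. }
  rewrite E.
  apply (is_derive_sum_f_R0 (fun k x => - ((1 - x / INR n) ^ S k / INR (S k)))).
  intros k. auto_derive; auto.
  assert (Hk : match k with 0%nat => 1 | S _ => INR k + 1 end = INR (S k))
    by (destruct k; [simpl; ring | rewrite (S_INR (S k)); reflexivity]).
  rewrite Hk. assert (0 < INR (S k)) by apply lt_0_INR, Nat.lt_0_succ.
  unfold Rminus, Rdiv. field. split; lra.
Qed.

Lemma harm_density_bounds t : 0 <= t <= INR n -> 0 <= harm_density t <= 1.
Proof.
  intros Ht. pose proof (lt_0_INR n n_pos) as Hn. pose proof (one_sub_div_bounds t Ht).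
  destruct (sum_f_R0_bounds (fun k => (1 - t / INR n) ^ k) (pred n)) as [H1 H2].
  { intros k; split; [apply pow_le | apply pow_le_1]; lra. }
  replace (S (pred n)) with n in H2 by lia.
  unfold harm_density. split; [apply Rdiv_le_0_compat; lra|].
  apply (Rmult_le_reg_r (INR n)); auto. unfold Rdiv. rewrite Rmult_assoc, Rinv_l; lra.
Qed.

Lemma mul_harm_density t : t * harm_density t = 1 - trunc_exp t.
Proof.
  pose proof (lt_0_INR n n_pos) as Hn. unfold harm_density, trunc_exp.
  generalize (GP_finite (1 - t / INR n) (pred n)).
  replace (pred n + 1)%nat with n by lia. intros H.
  replace (t * (sum_f_R0 (fun k => (1 - t / INR n) ^ k) (pred n) / INR n))
    with (- (sum_f_R0 (fun k => (1 - t / INR n) ^ k) (pred n) * (1 - t / INR n - 1)))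
    by (field; lra).
  rewrite H. ring.
Qed.

Lemma continuous_harm_density t : continuous harm_density t.
Proof.
  unfold harm_density, Rdiv.
  apply (continuous_mult (fun t => sum_f_R0 (fun k => (1 - t / INR n) ^ k) (pred n))
                         (fun _ => / INR n)).
  - apply (continuous_sum_f_R0 (fun k x => (1 - x / INR n) ^ k)).
    intros k. apply ex_derive_continuous_R. auto_derive. auto.
  - apply continuous_const.
Qed.

Lemma ex_RInt_harm_density A B : ex_RInt harm_density A B.
Proof.
  apply (ex_RInt_continuous harm_density A B). intros z _. apply continuous_harm_density.
Qed.

Lemma harm_primitive_ends : harm_primitive (INR n) - harm_primitive 0 = harmonic.
Proof.
  pose proof (lt_0_INR n n_pos) as Hn. unfold harm_primitive, harmonic.
  replace (INR n / INR n) with 1 by (field; lra).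
  replace (0 / INR n) with 0 by (field; lra).
  induction (pred n) as [|j IH]; [simpl; field|].
  rewrite !tech5, <- IH. assert (0 < INR (S (S j))) by apply lt_0_INR, Nat.lt_0_succ.
  replace ((1 - 1) ^ S (S j)) with 0 by (simpl; ring).
  replace ((1 - 0) ^ S (S j)) with 1 by (rewrite Rminus_0_r, pow1; ring).
  field. lra.
Qed.

Lemma is_RInt_harm_density : is_RInt harm_density 0 (INR n) harmonic.
Proof.
  rewrite <- harm_primitive_ends.
  apply (is_RInt_derive harm_primitive harm_density).
  - intros x _. apply is_derive_harm_primitive.
  - intros x _. apply continuous_harm_density.
Qed.

Lemma RInt_one_sub_exp_div_split A B : 0 < A <= B ->
  RInt (fun t => (1 - exp (- t)) / t) A B =
  RInt harm_density A B + RInt (fun t => (trunc_exp t - exp (- t)) / t) A B.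
Proof.
  intros HAB. rewrite <- RInt_plus_R.
  - apply RInt_ext. intros x Hx. rewrite Rmin_left, Rmax_right in Hx by lra.
    R_eq. assert (E := mul_harm_density x).
    replace (harm_density x) with ((1 - trunc_exp x) / x) by (rewrite <- E; field; lra).
    field; lra.
  - apply ex_RInt_harm_density.
  - apply ex_RInt_of_ex_derive_pos; try lra. intros t Ht. unfold trunc_exp. auto_derive. lra.
Qed.

Lemma harmonic_Chasles A B :
  harmonic = RInt harm_density 0 A + RInt harm_density A B + RInt harm_density B (INR n).
Proof.
  rewrite (RInt_Chasles_R harm_density 0 A B), (RInt_Chasles_R harm_density 0 B (INR n));
    try apply ex_RInt_harm_density.
  symmetry. apply is_RInt_unique, is_RInt_harm_density.
Qed.

Lemma RInt_harm_density_tail B : 0 < B <= INR n ->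
  RInt harm_density B (INR n) = ln (INR n) - ln B - RInt (fun t => trunc_exp t / t) B (INR n).
Proof.
  intros HB.
  assert (HL : RInt (fun t => / t) B (INR n) = ln (INR n) - ln B).
  { apply is_RInt_unique, (is_RInt_derive ln (fun t => / t)).
    - intros x Hx. rewrite Rmin_left, Rmax_right in Hx by lra. apply is_derive_ln. lra.
    - intros x Hx. rewrite Rmin_left, Rmax_right in Hx by lra.
      apply ex_derive_continuous_R. auto_derive. lra. }
  rewrite <- HL, <- RInt_minus_R.
  - apply RInt_ext. intros x Hx. rewrite Rmin_left, Rmax_right in Hx by lra.
    R_eq. assert (E := mul_harm_density x).
    replace (harm_density x) with ((1 - trunc_exp x) / x) by (rewrite <- E; field; lra).
    field; lra.
  - apply ex_RInt_of_ex_derive_pos; try lra. intros t Ht. auto_derive. lra.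
  - apply ex_RInt_of_ex_derive_pos; try lra. intros t Ht. unfold trunc_exp. auto_derive. lra.
Qed.

Lemma RInt_trunc_exp_error_le A B : 0 < A <= B -> B <= INR n ->
  Rabs (RInt (fun t => (trunc_exp t - exp (- t)) / t) A B) <= B / INR n.
Proof.
  intros HAB HBn. pose proof (lt_0_INR n n_pos) as Hn.
  apply Rle_trans with ((B - A) * / INR n).
  - apply abs_RInt_le_const; [lra| |].
    + apply ex_RInt_of_ex_derive_pos; try lra. intros t Ht. unfold trunc_exp. auto_derive. lra.
    + intros t Ht. destruct (trunc_exp_bounds t) as [H1 H2]; [lra|].
      assert (0 < / INR n) by (apply Rinv_0_lt_compat; auto).
      rewrite Rabs_left1.
      * apply (Rmult_le_reg_r t); [lra|].
        replace (- ((trunc_exp t - exp (- t)) / t) * t) with (exp (- t) - trunc_exp t)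
          by (field; lra).
        apply Rle_trans with (t * t * exp (- t) / INR n); auto.
        generalize (mul_exp_neg_le_1 t). unfold Rdiv.
        assert (0 <= t * / INR n) by (apply Rmult_le_pos; lra). nra.
      * unfold Rdiv. apply Rmult_le_0_r; [lra | left; apply Rinv_0_lt_compat; lra].
  - apply Rmult_le_compat_r; [left; apply Rinv_0_lt_compat; auto | lra].
Qed.

Lemma RInt_harm_density_head_le A : 0 < A <= INR n -> 0 <= RInt harm_density 0 A <= A.
Proof.
  intros HA. split.
  - apply RInt_ge_0; [lra | apply ex_RInt_harm_density|].
    intros x Hx. apply harm_density_bounds; lra.
  - apply Rle_trans with (Rabs (RInt harm_density 0 A)); [apply Rle_abs|].
    apply Rle_trans with ((A - 0) * 1); [|lra].
    apply abs_RInt_le_const; [lra | apply ex_RInt_harm_density|].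
    intros t Ht. destruct (harm_density_bounds t) as [H1 H2]; [lra|].
    rewrite Rabs_pos_eq; lra.
Qed.

Lemma RInt_trunc_exp_div_tail_le B : 1 <= B <= INR n ->
  0 <= RInt (fun t => trunc_exp t / t) B (INR n) <= exp (- B).
Proof.
  intros HB.
  assert (Hq : forall t, B <= t <= INR n -> 0 <= trunc_exp t <= exp (- t)).
  { intros t Ht. destruct (trunc_exp_bounds t) as [H1 H2]; [lra|].
    split; [|lra]. apply pow_le. apply (one_sub_div_bounds t). lra. }
  assert (Hex : ex_RInt (fun t => trunc_exp t / t) B (INR n)).
  { apply ex_RInt_of_ex_derive_pos; try lra. intros t Ht. unfold trunc_exp. auto_derive. lra. }
  split.
  - apply RInt_ge_0; [lra | exact Hex|].
    intros x Hx. apply Rdiv_le_0_compat; [apply Hq|]; lra.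
  - apply Rle_trans with (RInt (fun t => exp (- t)) B (INR n)).
    + apply RInt_le; [lra | exact Hex | |].
      * apply ex_RInt_of_ex_derive. intros t _. auto_derive. auto.
      * intros x Hx. destruct (Hq x) as [H1 H2]; [lra|].
        apply Rle_trans with (trunc_exp x); [|lra].
        apply (Rmult_le_reg_r x); [lra|]. unfold Rdiv.
        rewrite Rmult_assoc, Rinv_l by lra. nra.
    + rewrite RInt_exp_neg. generalize (exp_pos (- INR n)). lra.
Qed.

Lemma gamma_int_harmonic_approx A B : 0 < A < 1 -> 1 <= B <= INR n ->
  Rabs (gamma_int A B - (harmonic - ln (INR n))) <= 2 * sqrt A + A + B / INR n + 5 / B.
Proof.
  intros HA HB.
  rewrite gamma_int_by_parts, RInt_one_sub_exp_div_split, (harmonic_Chasles A B),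
    RInt_harm_density_tail by lra.
  set (J1 := RInt (fun t => (trunc_exp t - exp (- t)) / t) A B).
  set (J2 := RInt harm_density 0 A).
  set (J3 := RInt (fun t => trunc_exp t / t) B (INR n)).
  assert (H1 := RInt_trunc_exp_error_le A B ltac:(lra) ltac:(lra)). fold J1 in H1.
  assert (H2 := RInt_harm_density_head_le A ltac:(lra)). fold J2 in H2.
  assert (H3 := RInt_trunc_exp_div_tail_le B HB). fold J3 in H3.
  assert (HlnA := neg_ln_mul_le_2_sqrt A HA).
  destruct (exp_neg_bounds A ltac:(lra)) as [HA1 _].
  destruct (exp_neg_bounds B ltac:(lra)) as [_ HB1].
  assert (HlnB := ln_mul_exp_neg_le B ltac:(lra)).
  assert (0 <= - ln A * (1 - exp (- A)) <= 2 * sqrt A).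
  { assert (ln A < 0) by (rewrite <- ln_1; apply ln_increasing; lra). nra. }
  replace (RInt harm_density A B + J1 - (ln B * (1 - exp (- B)) - ln A * (1 - exp (- A)))
           - (J2 + RInt harm_density A B + (ln (INR n) - ln B - J3) - ln (INR n)))
    with (J1 + ln B * exp (- B) + ln A * (1 - exp (- A)) - J2 + J3) by ring.
  apply Rabs_le_between in H1.
  assert (0 <= B / INR n) by (apply Rdiv_le_0_compat; pose proof (lt_0_INR n n_pos) as Hn; lra).
  assert (4 / B + 1 / B = 5 / B) by (field; lra).
  apply Rabs_le. split; lra.
Qed.

End Truncated_exponential.

Definition euler_seq (n : nat) := sum_f_R0 (fun k => / INR (S k)) n - ln (INR (S n)).

Lemma gamma_int_euler_seq_approx n A B : 0 < A < 1 -> 1 <= B <= INR (S n) ->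
  Rabs (gamma_int A B - euler_seq n) <= 2 * sqrt A + A + B / INR (S n) + 5 / B.
Proof. apply (gamma_int_harmonic_approx (S n)). lia. Qed.

Lemma INR_S_eventually_ge B e : 0 < B -> 0 < e ->
  exists N, forall k, (N <= k)%nat -> B <= INR (S k) /\ B / INR (S k) <= e.
Proof.
  intros HB He. set (e' := Rmin 1 e).
  assert (He' : 0 < e' <= 1 /\ e' <= e)
    by (unfold e'; repeat split; [apply Rmin_glb_lt | apply Rmin_l | apply Rmin_r]; lra).
  destruct (archimed_cor1 (e' / B)) as [N [HN HN0]]; [apply Rdiv_lt_0_compat; lra|].
  exists N. intros k Hk.
  assert (HNk : INR N <= INR (S k)) by (apply le_INR; lia).
  assert (0 < INR N) by (apply lt_0_INR; lia).
  assert (HBk : B / INR (S k) < e').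
  { apply Rle_lt_trans with (B * / INR N).
    - apply Rmult_le_compat_l; [lra|]. apply Rinv_le_contravar; lra.
    - apply (Rmult_lt_reg_r (/ B)); [apply Rinv_0_lt_compat; lra|].
      replace (B * / INR N * / B) with (/ INR N) by (field; lra). exact HN. }
  split; [|lra].
  apply (Rmult_le_reg_r (/ INR (S k))); [apply Rinv_0_lt_compat; lra|].
  rewrite Rinv_r by lra. unfold Rdiv in HBk. lra.
Qed.

Lemma euler_seq_cauchy : ex_lim_seq_cauchy euler_seq.
Proof.
  intros [e He]. simpl.
  set (u := Rmin (1/2) (e / 16)).
  assert (Hu : 0 < u <= 1/2 /\ u <= e / 16)
    by (unfold u; repeat split; [apply Rmin_glb_lt | apply Rmin_l | apply Rmin_r]; lra).
  set (B := 1 + 40 / e).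
  assert (0 < 40 / e) by (apply Rdiv_lt_0_compat; lra).
  assert (HB5 : 5 / B <= e / 8).
  { apply Rle_trans with (5 / (40 / e)); [|right; field; lra].
    unfold Rdiv at 1 2. apply Rmult_le_compat_l; [lra|].
    apply Rinv_le_contravar; unfold B; lra. }
  assert (HsA : sqrt (u * u) = u) by (apply sqrt_square; lra).
  assert (HB : 1 <= B) by (unfold B; lra).
  assert (HA : 0 < u * u < 1) by (split; nra).
  destruct (INR_S_eventually_ge B (e / 16)) as [N HN]; try lra.
  exists N. intros n m Hn Hm.
  destruct (HN n Hn) as [Hn1 Hn2]. destruct (HN m Hm) as [Hm1 Hm2].
  assert (Bn := gamma_int_euler_seq_approx n (u * u) B HA ltac:(lra)).
  assert (Bm := gamma_int_euler_seq_approx m (u * u) B HA ltac:(lra)).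
  rewrite HsA in Bn, Bm. apply Rabs_le_between in Bn. apply Rabs_le_between in Bm.
  assert (u * u <= u / 2) by nra.
  apply Rabs_def1; lra.
Qed.

Lemma is_lim_seq_euler_seq : is_lim_seq euler_seq euler_gamma.
Proof.
  destruct (proj2 (ex_lim_seq_cauchy_corr euler_seq) euler_seq_cauchy) as [l Hl].
  unfold euler_gamma. fold euler_seq. rewrite (is_lim_seq_unique _ _ Hl). exact Hl.
Qed.

Lemma gamma_int_euler_approx A B : 0 < A < 1 -> 1 <= B ->
  Rabs (gamma_int A B - euler_gamma) <= 2 * sqrt A + A + 5 / B.
Proof.
  intros HA HB. apply Rle_plus_epsilon. intros eta Heta.
  destruct (proj1 (is_lim_seq_Reals _ _) is_lim_seq_euler_seq (eta / 2)) as [N1 HN1]; [lra|].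
  destruct (INR_S_eventually_ge B (eta / 2)) as [N2 HN2]; try lra.
  destruct (HN2 (N1 + N2)%nat) as [HB1 HB2]; [lia|].
  assert (H1 := HN1 (N1 + N2)%nat ltac:(lia)). unfold R_dist in H1.
  assert (H2 := gamma_int_euler_seq_approx (N1 + N2) A B HA ltac:(lra)).
  apply Rabs_le_between in H2. apply Rabs_lt_between in H1.
  apply Rabs_le. lra.
Qed.

(** * Gumbel integrals *)

Definition is_integral_R (f : R -> R) (l : R) :=
  is_RInt_gen f (Rbar_locally m_infty) (Rbar_locally p_infty) l.

Lemma integral_R_unique (f : R -> R) l : is_integral_R f l -> integral_R f = l.
Proof. intros H. exact (is_RInt_gen_unique f l H). Qed.

Lemma is_integral_R_ext (f g : R -> R) l :
  (forall x, f x = g x) -> is_integral_R f l -> is_integral_R g l.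
Proof.
  intros Hfg. apply is_RInt_gen_ext.
  apply Filter_prod with (fun _ => True) (fun _ => True); [exists 0 | exists 0 |]; auto.
Qed.

Lemma is_integral_R_scal (f : R -> R) k l :
  is_integral_R f l -> is_integral_R (fun x => k * f x) (k * l).
Proof. exact (is_RInt_gen_scal f k l). Qed.

Lemma is_integral_R_intro (f : R -> R) l : (forall a b, ex_RInt f a b) ->
  (forall eps, 0 < eps -> exists M, forall a b, a < - M -> M < b -> Rabs (RInt f a b - l) < eps) ->
  is_integral_R f l.
Proof.
  intros Hex Hlim P [eps HP].
  destruct (Hlim eps (cond_pos eps)) as [M HM].
  apply (Filter_prod _ _ _ (fun a => a < - Rabs M) (fun b => Rabs M < b));
    [exists (- Rabs M) | exists (Rabs M) |]; auto.
  intros a b Ha Hb. exists (RInt f a b). split; [exact (RInt_correct f a b (Hex a b))|].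
  apply HP. generalize (Rle_abs M) (Rle_abs (- M)). rewrite Rabs_Ropp. intros.
  apply HM; lra.
Qed.

Definition gumbel_tail (L x : R) := exp (- (x - L + euler_gamma)).

Lemma gumbel_pdf_shift L x : gumbel_pdf (x - L) = gumbel_tail L x * exp (- gumbel_tail L x).
Proof. reflexivity. Qed.

Lemma gumbel_tail_pos L x : 0 < gumbel_tail L x.
Proof. apply exp_pos. Qed.

Lemma gumbel_tail_eventually L eta T : 0 < eta -> 0 < T ->
  exists M, forall a b, a < - M -> M < b -> gumbel_tail L b < eta /\ T < gumbel_tail L a.
Proof.
  intros Heta HT.
  set (M := Rmax (Rabs (L - euler_gamma - ln eta)) (Rabs (L - euler_gamma - ln T))).
  exists M. intros a b Ha Hb. unfold gumbel_tail.
  rewrite <- (exp_ln eta Heta), <- (exp_ln T HT).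
  generalize (Rmax_l (Rabs (L - euler_gamma - ln eta)) (Rabs (L - euler_gamma - ln T)))
    (Rmax_r (Rabs (L - euler_gamma - ln eta)) (Rabs (L - euler_gamma - ln T)))
    (Rle_abs (L - euler_gamma - ln eta)) (Rle_abs (- (L - euler_gamma - ln T))).
  rewrite Rabs_Ropp. fold M. intros.
  split; apply exp_increasing; lra.
Qed.

Lemma RInt_gumbel_pdf L a b :
  RInt (fun x => gumbel_pdf (x - L)) a b = exp (- gumbel_tail L b) - exp (- gumbel_tail L a).
Proof.
  apply is_RInt_unique, (is_RInt_derive (fun x => exp (- gumbel_tail L x))).
  - intros x _. unfold gumbel_tail. auto_derive; auto.
    rewrite gumbel_pdf_shift. unfold gumbel_tail. R_eq. unfold Rminus. ring.
  - intros x _. apply ex_derive_continuous_R. unfold gumbel_pdf, gumbel_cdf. auto_derive. auto.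
Qed.

Lemma RInt_gumbel_mean L a b :
  RInt (fun x => x * gumbel_pdf (x - L)) a b =
  (L - euler_gamma) * (exp (- gumbel_tail L b) - exp (- gumbel_tail L a))
  + gamma_int (gumbel_tail L b) (gumbel_tail L a).
Proof.
  set (c := L - euler_gamma).
  set (g := fun t => - ((c - ln t) * exp (- t))).
  assert (Ha := gumbel_tail_pos L a). assert (Hb := gumbel_tail_pos L b).
  (* substitute t = gumbel_tail L x, so that x = c - ln t *)
  transitivity (RInt (fun x => scal (- gumbel_tail L x) (g (gumbel_tail L x))) a b).
  { apply RInt_ext. intros x _. rewrite gumbel_pdf_shift.
    unfold scal, g; simpl; unfold mult; simpl.
    replace (ln (gumbel_tail L x)) with (- (x - L + euler_gamma))
      by (unfold gumbel_tail; rewrite ln_exp; reflexivity).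
    unfold c. R_eq. ring. }
  rewrite (RInt_comp g (gumbel_tail L) (fun x => - gumbel_tail L x)).
  - rewrite <- (opp_RInt_swap g).
    2: { apply ex_RInt_of_ex_derive_pos; auto. intros t Ht. unfold g. auto_derive. auto. }
    assert (E : RInt g (gumbel_tail L b) (gumbel_tail L a) =
      - c * RInt (fun t => exp (- t)) (gumbel_tail L b) (gumbel_tail L a)
      - gamma_int (gumbel_tail L b) (gumbel_tail L a)).
    { assert (Hexp : ex_RInt (fun t => exp (- t)) (gumbel_tail L b) (gumbel_tail L a))
        by (apply ex_RInt_of_ex_derive; intros t _; auto_derive; auto).
      unfold gamma_int. rewrite <- (RInt_scal (fun t => exp (- t))), <- RInt_minus_R; auto.
      - apply RInt_ext. intros x _. unfold g, scal; simpl; unfold mult; simpl. R_eq. ring.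
      - apply (ex_RInt_scal (fun t => exp (- t))). exact Hexp.
      - apply ex_RInt_of_ex_derive_pos; auto. intros t Ht. auto_derive. auto. }
    rewrite E, RInt_exp_neg. unfold opp; simpl. ring.
  - intros x _. apply ex_derive_continuous_R. unfold g. auto_derive. apply gumbel_tail_pos.
  - intros x _. split.
    + unfold gumbel_tail. auto_derive; auto. R_eq. unfold Rminus. ring.
    + apply ex_derive_continuous_R. unfold gumbel_tail. auto_derive. auto.
Qed.

Lemma RInt_gumbel_pdf_error L a b :
  Rabs (RInt (fun x => gumbel_pdf (x - L)) a b - 1) <= gumbel_tail L b + 1 / gumbel_tail L a.
Proof.
  rewrite RInt_gumbel_pdf.
  destruct (exp_neg_bounds (gumbel_tail L b) (gumbel_tail_pos L b)) as [Hb _].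
  destruct (exp_neg_bounds (gumbel_tail L a) (gumbel_tail_pos L a)) as [_ Ha].
  apply Rabs_le. lra.
Qed.

Lemma RInt_gumbel_mean_error L a b : gumbel_tail L b < 1 -> 1 <= gumbel_tail L a ->
  Rabs (RInt (fun x => x * gumbel_pdf (x - L)) a b - L)
    <= (Rabs (L - euler_gamma) + 3) * sqrt (gumbel_tail L b)
       + (Rabs (L - euler_gamma) + 5) / gumbel_tail L a.
Proof.
  rewrite RInt_gumbel_mean.
  set (tb := gumbel_tail L b). set (ta := gumbel_tail L a). set (K := Rabs (L - euler_gamma)).
  intros Htb Hta. assert (Htb0 : 0 < tb) by apply gumbel_tail_pos.
  assert (HI := gamma_int_euler_approx tb ta ltac:(lra) Hta).
  destruct (exp_neg_bounds tb Htb0) as [Eb _].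
  destruct (exp_neg_bounds ta ltac:(lra)) as [_ Ea].
  assert (Hsq : tb <= sqrt tb).
  { rewrite <- (sqrt_square tb) at 1 by lra. apply sqrt_le_1_alt. nra. }
  assert (HK : 0 <= K) by apply Rabs_pos.
  replace ((L - euler_gamma) * (exp (- tb) - exp (- ta)) + gamma_int tb ta - L)
    with (- (L - euler_gamma) * (1 - exp (- tb)) - (L - euler_gamma) * exp (- ta)
          + (gamma_int tb ta - euler_gamma)) by ring.
  apply Rle_trans with (K * tb + K * (1 / ta) + (2 * sqrt tb + tb + 5 / ta)).
  - unfold Rminus at 1. eapply Rle_trans; [apply Rabs_triang|].
    apply Rplus_le_compat; [|exact HI].
    eapply Rle_trans; [apply Rabs_triang|].
    rewrite Rabs_Ropp, !Rabs_mult, Rabs_Ropp, (Rabs_pos_eq (1 - _)), (Rabs_pos_eq (exp _))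
      by lra.
    fold K. apply Rplus_le_compat; apply Rmult_le_compat_l; lra.
  - assert (0 <= K * tb <= K * sqrt tb) by (split; nra).
    replace ((K + 5) / ta) with (K * (1 / ta) + 5 / ta) by (field; lra).
    lra.
Qed.

Lemma is_integral_gumbel_pdf L : is_integral_R (fun x => gumbel_pdf (x - L)) 1.
Proof.
  apply is_integral_R_intro.
  - intros a b. apply ex_RInt_of_ex_derive. intros t _.
    unfold gumbel_pdf, gumbel_cdf. auto_derive. auto.
  - intros eps Heps.
    destruct (gumbel_tail_eventually L (eps / 2) (2 / eps)) as [M HM];
      [lra | apply Rdiv_lt_0_compat; lra|].
    exists M. intros a b Ha Hb. destruct (HM a b Ha Hb) as [Htb Hta].
    assert (1 / gumbel_tail L a < eps / 2).
    { apply (Rmult_lt_reg_r (gumbel_tail L a)); [apply gumbel_tail_pos|].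
      replace (1 / gumbel_tail L a * gumbel_tail L a) with 1
        by (field; generalize (gumbel_tail_pos L a); lra).
      apply Rle_lt_trans with (eps / 2 * (2 / eps)); [right; field; lra|].
      apply Rmult_lt_compat_l; lra. }
    eapply Rle_lt_trans; [apply RInt_gumbel_pdf_error | lra].
Qed.

Lemma is_integral_gumbel_mean L : is_integral_R (fun x => x * gumbel_pdf (x - L)) L.
Proof.
  apply is_integral_R_intro.
  - intros a b. apply ex_RInt_of_ex_derive. intros t _.
    unfold gumbel_pdf, gumbel_cdf. auto_derive. auto.
  - intros eps Heps. set (K := Rabs (L - euler_gamma)).
    assert (HK : 0 <= K) by apply Rabs_pos.
    set (u := Rmin 1 (eps / (2 * (K + 3)))).
    assert (Hu : 0 < u <= 1 /\ u <= eps / (2 * (K + 3)))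
      by (unfold u; repeat split; [apply Rmin_glb_lt | apply Rmin_l | apply Rmin_r];
          try apply Rdiv_lt_0_compat; lra).
    set (T := 2 * (K + 5) / eps + 1).
    assert (HT : 1 < T) by (unfold T; assert (0 < 2 * (K + 5) / eps)
                             by (apply Rdiv_lt_0_compat; lra); lra).
    destruct (gumbel_tail_eventually L (u * u) T) as [M HM]; [nra | lra|].
    exists M. intros a b Ha Hb. destruct (HM a b Ha Hb) as [Htb Hta].
    assert (Hsq : sqrt (gumbel_tail L b) < u).
    { rewrite <- (sqrt_square u) by lra. apply sqrt_lt_1_alt.
      split; [left; apply gumbel_tail_pos | exact Htb]. }
    assert ((K + 3) * sqrt (gumbel_tail L b) < eps / 2).
    { apply Rlt_le_trans with ((K + 3) * (eps / (2 * (K + 3)))); [|right; field; lra].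
      apply Rmult_lt_compat_l; lra. }
    assert ((K + 5) / gumbel_tail L a < eps / 2).
    { apply (Rmult_lt_reg_r (gumbel_tail L a)); [lra|].
      replace ((K + 5) / gumbel_tail L a * gumbel_tail L a) with (K + 5) by (field; lra).
      apply Rle_lt_trans with (eps / 2 * (2 * (K + 5) / eps)); [right; field; lra|].
      apply Rmult_lt_compat_l; unfold T in Hta; lra. }
    eapply Rle_lt_trans; [apply RInt_gumbel_mean_error; nra | fold K; lra].
Qed.

Lemma gumbel_pdf_mul_cdf a b c x S : S = exp a + exp b + exp c ->
  gumbel_pdf (x - a) * gumbel_cdf (x - b) * gumbel_cdf (x - c) =
  exp a / S * gumbel_pdf (x - ln S).
Proof.
  intros HS.
  assert (HS0 : 0 < S) by (rewrite HS; generalize (exp_pos a) (exp_pos b) (exp_pos c); lra).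
  assert (Hshift : forall y, exp (- (x - y + euler_gamma)) = exp y * exp (- (x + euler_gamma)))
    by (intros y; rewrite <- exp_plus; f_equal; ring).
  unfold gumbel_pdf, gumbel_cdf. rewrite !Hshift, exp_ln by auto.
  set (u := exp (- (x + euler_gamma))).
  replace (exp (- (S * u))) with (exp (- (exp a * u)) * exp (- (exp b * u)) * exp (- (exp c * u)))
    by (rewrite <- !exp_plus; f_equal; rewrite HS; ring).
  field. lra.
Qed.

Lemma win3_eq a b c : win3 a b c = exp a / (exp a + exp b + exp c).
Proof.
  apply integral_R_unique.
  apply (is_integral_R_ext (fun x => exp a / (exp a + exp b + exp c)
                                      * gumbel_pdf (x - ln (exp a + exp b + exp c)))).
  - intros x. symmetry. apply gumbel_pdf_mul_cdf. reflexivity.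
  - pose proof (is_integral_R_scal _ (exp a / (exp a + exp b + exp c)) 1
      (is_integral_gumbel_pdf (ln (exp a + exp b + exp c)))) as H.
    rewrite Rmult_1_r in H. exact H.
Qed.

Lemma emax3_eq a b c : emax3 a b c = ln (exp a + exp b + exp c).
Proof.
  remember (exp a + exp b + exp c) as S eqn:HS.
  assert (HS0 : 0 < S) by (rewrite HS; generalize (exp_pos a) (exp_pos b) (exp_pos c); lra).
  apply integral_R_unique.
  apply (is_integral_R_ext (fun x => x * gumbel_pdf (x - ln S))); [|apply is_integral_gumbel_mean].
  intros x. symmetry. rewrite (gumbel_pdf_mul_cdf a b c x S), (gumbel_pdf_mul_cdf b a c x S),
    (gumbel_pdf_mul_cdf c a b x S) by (rewrite HS; ring).
  transitivity (x * ((exp a + exp b + exp c) / S * gumbel_pdf (x - ln S))); [field; lra|].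
  rewrite <- HS. field. lra.
Qed.

(** * The PEAR chain *)

Section Pear_chain.

Variables p VP vN : R.

Let w_succ := win3 vN 0 VP.
Let w_fail := win3 VP 0 vN + win3 0 VP vN.

Lemma explore_outcome_probs : 0 <= w_succ /\ 0 <= w_fail /\ w_succ + w_fail = 1.
Proof.
  unfold w_succ, w_fail. rewrite !win3_eq, exp_0.
  generalize (exp_pos vN) (exp_pos VP); intros.
  split; [apply Rdiv_le_0_compat; lra|]. split.
  - apply Rplus_le_le_0_compat; apply Rdiv_le_0_compat; lra.
  - field. lra.
Qed.

Lemma pear_exp_bounds (f : nat -> nat -> R) m M :
  (forall a b, m <= f a b <= M) -> forall t a b, m <= pear_exp p VP vN t f a b <= M.
Proof.
  intros Hf t. destruct explore_outcome_probs as [H1 [H2 H3]].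
  induction t as [|t IH]; intros a b; simpl; [apply Hf|].
  destruct (pear_explore p VP a b); [|apply IH]. fold w_succ w_fail.
  destruct (IH (S a) b). destruct (IH a (S b)). nra.
Qed.

Lemma pear_exp_stopped (f : nat -> nat -> R) a b : pear_explore p VP a b = false ->
  forall t, pear_exp p VP vN t f a b = f a b.
Proof. intros H t. induction t as [|t IH]; simpl; [|rewrite H]; auto. Qed.

Lemma pear_exp_ge_pow (f : nat -> nat -> R) M U :
  (forall a b, 0 <= f a b <= M) -> (forall a, U <= f a 0%nat) ->
  (forall a, pear_explore p VP a 0%nat = true) ->
  forall t a, w_succ ^ t * U <= pear_exp p VP vN t f a 0%nat.
Proof.
  intros Hf HU Hex t. destruct explore_outcome_probs as [H1 [H2 H3]].
  induction t as [|t IH]; intros a; simpl; [rewrite Rmult_1_l; apply HU|].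
  rewrite Hex. fold w_succ w_fail.
  generalize (IH (S a)) (pear_exp_bounds f 0 M Hf t a 1%nat). nra.
Qed.

Lemma pear_exp_stop_at_failure (f : nat -> nat -> R) N E X :
  (forall a, f a 0%nat = E) ->
  (forall a, (a < N)%nat -> pear_explore p VP a 1%nat = false /\ f a 1%nat = X) ->
  (forall a, pear_explore p VP a 0%nat = true) ->
  forall t a, (a + t <= N)%nat ->
  pear_exp p VP vN t f a 0%nat = stop_mix w_succ E X t.
Proof.
  intros HE HX Hex t. unfold stop_mix. destruct explore_outcome_probs as [H1 [H2 H3]].
  induction t as [|t IH]; intros a Ha; simpl; [rewrite HE; ring|].
  rewrite Hex. fold w_succ w_fail.
  rewrite IH by lia. destruct (HX a ltac:(lia)) as [Hstop HXa].
  rewrite pear_exp_stopped, HXa by auto.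
  replace w_fail with (1 - w_succ) by lra. ring.
Qed.

End Pear_chain.

Lemma win3_low VP : win3 (-1) 0 VP = rho2 VP.
Proof. rewrite win3_eq, exp_0. unfold rho2. f_equal. ring. Qed.

Lemma win3_high p VP : win3 ((1 - p) / p) 0 VP = rho1 p VP.
Proof. rewrite win3_eq, exp_0. unfold rho1. f_equal. ring. Qed.

Lemma rho_bounds p VP : 0 < p < 1 -> 0 < rho2 VP /\ rho2 VP < rho1 p VP /\ rho1 p VP < 1.
Proof.
  intros Hp. unfold rho1, rho2.
  assert (Hk : -1 < (1 - p) / p)
    by (assert (0 < (1 - p) / p) by (apply Rdiv_lt_0_compat; lra); lra).
  generalize (exp_increasing _ _ Hk) (exp_pos (-1)) (exp_pos VP) (exp_pos ((1 - p) / p)).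
  set (e1 := exp (-1)). set (ek := exp ((1 - p) / p)). set (C := 1 + exp VP). intros.
  replace (1 + exp VP + e1) with (C + e1) by (unfold C; ring).
  replace (1 + exp VP + ek) with (C + ek) by (unfold C; ring).
  assert (0 < C) by (unfold C; lra).
  split; [apply Rdiv_lt_0_compat; lra|]. split.
  - apply (Rmult_lt_reg_r ((C + e1) * (C + ek))); [nra|].
    replace (e1 / (C + e1) * ((C + e1) * (C + ek))) with (e1 * (C + ek)) by (field; lra).
    replace (ek / (C + ek) * ((C + e1) * (C + ek))) with (ek * (C + e1)) by (field; lra). nra.
  - apply (Rmult_lt_reg_r (C + ek)); [lra|].
    replace (ek / (C + ek) * (C + ek)) with ek by (field; lra). lra.
Qed.

Lemma rho2_bounds VP : 0 < rho2 VP < 1.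
Proof. destruct (rho_bounds (1/2) VP) as [H1 [H2 H3]]; lra. Qed.

Lemma one_sub_rho1_le p VP : 0 < p < 1 -> 0 < 1 - rho1 p VP <= (1 + exp VP) * p.
Proof.
  intros Hp. destruct (rho_bounds p VP Hp) as [_ [_ H3]]. split; [lra|].
  unfold rho1. set (k := (1 - p) / p). set (C := 1 + exp VP).
  generalize (exp_ineq1_le k) (exp_pos k) (exp_pos VP); intros.
  assert (Hk : 1 + k = / p) by (unfold k; field; lra).
  replace (1 + exp VP + exp k) with (C + exp k) by (unfold C; ring).
  assert (0 < C) by (unfold C; lra).
  replace (1 - exp k / (C + exp k)) with (C / (C + exp k)) by (field; lra).
  apply (Rmult_le_reg_r ((C + exp k) / p)); [apply Rdiv_lt_0_compat; lra|].
  replace (C / (C + exp k) * ((C + exp k) / p)) with (C * / p) by (field; lra).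
  replace (C * p * ((C + exp k) / p)) with (C * (C + exp k)) by (field; lra).
  rewrite <- Hk. nra.
Qed.

Definition likelihood_ratio p VP (S F : nat) :=
  (rho2 VP ^ S * (1 - rho2 VP) ^ F) / (rho1 p VP ^ S * (1 - rho1 p VP) ^ F).

Lemma pear_explore_of_ratio_le p VP a b : 0 < p < 1 ->
  likelihood_ratio p VP a b <= 1 -> pear_explore p VP a b = true.
Proof.
  intros Hp HR. unfold pear_explore. destruct (Rle_dec p (pear_post p VP a b)) as [H|H]; auto.
  exfalso. apply H. unfold pear_post. fold (likelihood_ratio p VP a b).
  set (r := likelihood_ratio p VP a b) in *.
  destruct (rho_bounds p VP Hp) as [H1 [H2 H3]].
  assert (0 <= r).
  { unfold r, likelihood_ratio. apply Rdiv_le_0_compat.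
    - apply Rmult_le_pos; apply pow_le; lra.
    - apply Rmult_lt_0_compat; apply pow_lt; lra. }
  assert (Hk : 0 < (1 - p) / p) by (apply Rdiv_lt_0_compat; lra).
  (* [p] is the posterior for a likelihood ratio equal to [1] *)
  replace p with (/ (1 + (1 - p) / p)) at 1 by (field; lra).
  apply Rinv_le_contravar; nra.
Qed.

Lemma pear_explore_of_ratio_gt p VP a b : 0 < p < 1 ->
  1 < likelihood_ratio p VP a b -> pear_explore p VP a b = false.
Proof.
  intros Hp HR. unfold pear_explore. destruct (Rle_dec p (pear_post p VP a b)) as [H|H]; auto.
  exfalso. revert H. apply Rlt_not_le. unfold pear_post. fold (likelihood_ratio p VP a b).
  set (r := likelihood_ratio p VP a b) in *.
  assert (Hk : 0 < (1 - p) / p) by (apply Rdiv_lt_0_compat; lra).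
  replace p with (/ (1 + (1 - p) / p)) at 3 by (field; lra).
  assert (0 < (1 - p) / p * r) by (apply Rmult_lt_0_compat; lra).
  apply Rinv_lt_contravar; [apply Rmult_lt_0_compat|]; nra.
Qed.

Lemma pear_explore_no_failure p VP a : 0 < p < 1 -> pear_explore p VP a 0 = true.
Proof.
  intros Hp. apply pear_explore_of_ratio_le; auto. unfold likelihood_ratio. simpl.
  rewrite !Rmult_1_r. destruct (rho_bounds p VP Hp) as [H1 [H2 H3]].
  assert (0 < rho1 p VP ^ a) by (apply pow_lt; lra).
  apply (Rmult_le_reg_r (rho1 p VP ^ a)); auto. unfold Rdiv.
  rewrite Rmult_assoc, Rinv_l, Rmult_1_r, Rmult_1_l by lra.
  apply pow_incr; lra.
Qed.

Lemma pear_explore_one_failure p VP a : 0 < p < 1 ->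
  1 - rho1 p VP < rho2 VP ^ a * (1 - rho2 VP) -> pear_explore p VP a 1 = false.
Proof.
  intros Hp Hc. apply pear_explore_of_ratio_gt; auto. unfold likelihood_ratio. simpl.
  rewrite !Rmult_1_r. destruct (rho_bounds p VP Hp) as [H1 [H2 H3]].
  assert (0 < rho1 p VP ^ a) by (apply pow_lt; lra).
  assert (rho1 p VP ^ a <= 1) by (apply pow_le_1; lra).
  assert (0 < rho1 p VP ^ a * (1 - rho1 p VP)) by (apply Rmult_lt_0_compat; lra).
  apply (Rmult_lt_reg_r (rho1 p VP ^ a * (1 - rho1 p VP))); auto. unfold Rdiv.
  rewrite Rmult_assoc, Rinv_l, Rmult_1_r, Rmult_1_l by lra. nra.
Qed.

(* Under this condition a single failure among the first [N] recommendations
   pushes the posterior below [p], so that the low type is never explored again. *)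
Definition prior_small VP N p := 0 < p < 1 /\ (1 + exp VP) * p < rho2 VP ^ N * (1 - rho2 VP).

Lemma prior_small_eventually VP N : exists p1, 0 < p1 /\ forall p, 0 < p < p1 -> prior_small VP N p.
Proof.
  destruct (rho2_bounds VP) as [H1 H2].
  set (c := rho2 VP ^ N * (1 - rho2 VP)).
  assert (Hc : 0 < c) by (unfold c; apply Rmult_lt_0_compat; [apply pow_lt|]; lra).
  assert (HC : 0 < 1 + exp VP) by (generalize (exp_pos VP); lra).
  exists (Rmin (1/2) (c / (1 + exp VP))).
  split; [apply Rmin_glb_lt; [lra | apply Rdiv_lt_0_compat; lra]|].
  intros p Hp. generalize (Rmin_l (1/2) (c / (1 + exp VP))) (Rmin_r (1/2) (c / (1 + exp VP))).
  intros. split; [lra|].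
  apply Rlt_le_trans with ((1 + exp VP) * (c / (1 + exp VP))); [apply Rmult_lt_compat_l; lra|].
  right; unfold c; field; lra.
Qed.

Lemma pear_exp_low_type p VP N (f : nat -> nat -> R) E X t : prior_small VP N p ->
  (forall a b, f a b = if pear_explore p VP a b then E else X) -> (t <= N)%nat ->
  pear_exp p VP (-1) t f 0 0 = stop_mix (rho2 VP) E X t.
Proof.
  intros [Hp HN] Hf Ht. destruct (rho_bounds p VP Hp) as [H1 [H2 H3]].
  rewrite <- win3_low.
  apply (pear_exp_stop_at_failure p VP (-1) f N);
    [| | intros; apply pear_explore_no_failure; auto | lia].
  - intros a. rewrite Hf, pear_explore_no_failure; auto.
  - intros a Ha.
    assert (Hstop : pear_explore p VP a 1 = false).
    { apply pear_explore_one_failure; auto.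
      destruct (one_sub_rho1_le p VP Hp) as [_ B].
      assert (rho2 VP ^ N <= rho2 VP ^ a) by (apply pow_le_pow_of_le_1; lra || lia).
      assert (0 < 1 - rho2 VP) by lra. nra. }
    split; auto. rewrite Hf, Hstop. auto.
Qed.

(** * Engagement and utility *)

Definition eng_explore VP := (exp VP + exp (-1)) / (1 + exp VP + exp (-1)).
Definition eng_exploit VP := 2 * exp VP / (1 + 2 * exp VP).

Lemma eng_reward_low p VP a b :
  eng_reward p VP (-1) a b = if pear_explore p VP a b then eng_explore VP else eng_exploit VP.
Proof.
  unfold eng_reward, eng_explore, eng_exploit. rewrite !win3_eq, !exp_0.
  generalize (exp_pos VP) (exp_pos (-1)); intros.
  destruct (pear_explore p VP a b); field; lra.
Qed.

Lemma eng_reward_bounds p VP vN a b : 0 <= eng_reward p VP vN a b <= 1.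
Proof.
  unfold eng_reward. rewrite !win3_eq, !exp_0.
  generalize (exp_pos VP) (exp_pos vN); intros.
  assert (Hfrac : forall u v, 0 < u -> 0 < v -> 0 <= u / (u + 1 + v) + v / (v + 1 + u) <= 1).
  { intros u v Hu Hv.
    replace (u / (u + 1 + v) + v / (v + 1 + u)) with ((u + v) / (u + v + 1)) by (field; lra).
    split; [apply Rdiv_le_0_compat; lra|].
    apply (Rmult_le_reg_r (u + v + 1)); [lra|]. unfold Rdiv. rewrite Rmult_assoc, Rinv_l; lra. }
  destruct (pear_explore p VP a b); apply Hfrac; auto.
Qed.

Lemma eng_low_bounds VP : 0 <= eng_explore VP <= 1 /\ 0 <= eng_exploit VP <= 1.
Proof.
  unfold eng_explore, eng_exploit. generalize (exp_pos VP) (exp_pos (-1)); intros.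
  split; split; try (apply Rdiv_le_0_compat; lra).
  - apply (Rcomplements.Rdiv_le_1 (exp VP + exp (-1))); lra.
  - apply (Rcomplements.Rdiv_le_1 (2 * exp VP)); lra.
Qed.

Lemma pear_eng_approx VP d N p : 0 <= d < 1 -> prior_small VP N p ->
  Rabs (pear_eng VP d p
        - Series (fun t => d ^ t * stop_mix (rho2 VP) (eng_explore VP) (eng_exploit VP) t))
    <= p / (1 - d) + 2 * sqrt d ^ N / (1 - sqrt d).
Proof.
  intros Hd Hsmall. pose proof Hsmall as [Hp _]. unfold pear_eng.
  set (k := (1 - p) / p).
  set (Xh := fun t => pear_exp p VP k t (eng_reward p VP k) 0 0).
  set (Yl := fun t => pear_exp p VP (-1) t (eng_reward p VP (-1)) 0 0).
  set (Z := stop_mix (rho2 VP) (eng_explore VP) (eng_exploit VP)).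
  assert (HXh : forall t, 0 <= Xh t <= 1)
    by (intros t; apply pear_exp_bounds; intros; apply eng_reward_bounds).
  assert (HYl : forall t, 0 <= Yl t <= 1)
    by (intros t; apply pear_exp_bounds; intros; apply eng_reward_bounds).
  assert (HZ : forall t, 0 <= Z t <= 1).
  { intros t. destruct (eng_low_bounds VP), (rho2_bounds VP).
    apply stop_mix_bounds; auto; lra. }
  eapply Rle_trans;
    [apply (Series_discounted_close d (fun t => p * Xh t + (1 - p) * Yl t) Z N p 1); auto
    | rewrite Rmult_1_r; apply Rle_refl].
  - intros t. specialize (HXh t). specialize (HYl t). specialize (HZ t).
    split; rewrite Rabs_pos_eq; nra.
  - intros t Ht. unfold Yl.
    rewrite (pear_exp_low_type p VP N _ (eng_explore VP) (eng_exploit VP)) by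
      (auto; intros; apply eng_reward_low).
    fold Z. specialize (HXh t). specialize (HZ t).
    replace (p * Xh t + (1 - p) * Z t - Z t) with (p * (Xh t - Z t)) by ring.
    rewrite Rabs_mult, Rabs_pos_eq by lra.
    assert (Rabs (Xh t - Z t) <= 1) by (apply Rabs_le; lra). nra.
Qed.

Definition util_explore VP := ln (1 + exp (-1) + exp VP).
Definition util_exploit VP := ln (1 + 2 * exp VP).
Definition util_slack VP := ln (1 + 2 * exp VP) + ln (2 + exp VP).

Lemma util_reward_low p VP a b :
  util_reward p VP (-1) a b = if pear_explore p VP a b then util_explore VP else util_exploit VP.
Proof.
  unfold util_reward, util_explore, util_exploit. rewrite !emax3_eq, !exp_0.
  destruct (pear_explore p VP a b); f_equal; ring.
Qed.

Lemma util_low_nonneg VP : 0 <= util_explore VP /\ 0 <= util_exploit VP.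
Proof.
  unfold util_explore, util_exploit. generalize (exp_pos VP) (exp_pos (-1)); intros.
  split; apply ln_ge_0; lra.
Qed.

Lemma util_slack_nonneg VP : 0 <= util_slack VP.
Proof.
  unfold util_slack. generalize (exp_pos VP); intros.
  generalize (ln_ge_0 (1 + 2 * exp VP)) (ln_ge_0 (2 + exp VP)). lra.
Qed.

Lemma util_reward_high_bounds p VP a b : 0 < p < 1 ->
  0 <= util_reward p VP ((1 - p) / p) a b <= (1 - p) / p + util_slack VP.
Proof.
  intros Hp. set (k := (1 - p) / p).
  assert (Hk : 0 < k) by (apply Rdiv_lt_0_compat; lra).
  generalize (exp_pos VP) (exp_pos k) (exp_ineq1_le k); intros.
  assert (0 <= ln (1 + 2 * exp VP)) by (apply ln_ge_0; lra).
  assert (0 <= ln (2 + exp VP)) by (apply ln_ge_0; lra).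
  unfold util_reward, util_slack. rewrite !emax3_eq, !exp_0.
  destruct (pear_explore p VP a b); split.
  - apply ln_ge_0. lra.
  - assert (ln (1 + exp VP + exp k) <= k + ln (2 + exp VP)); [|lra].
    rewrite <- (ln_exp k) at 2. rewrite <- ln_mult by lra. apply ln_le; nra.
  - apply ln_ge_0. lra.
  - replace (1 + exp VP + exp VP) with (1 + 2 * exp VP) by ring. lra.
Qed.

Lemma util_reward_high_no_failure p VP a : 0 < p < 1 ->
  (1 - p) / p <= util_reward p VP ((1 - p) / p) a 0.
Proof.
  intros Hp. unfold util_reward. rewrite pear_explore_no_failure, emax3_eq, exp_0 by auto.
  generalize (exp_pos VP) (exp_pos ((1 - p) / p)); intros.
  rewrite <- (ln_exp ((1 - p) / p)) at 1. apply ln_le; lra.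
Qed.

Lemma Series_util_high_bounds p VP d : 0 < p < 1 -> 0 <= d < 1 ->
  let k := (1 - p) / p in
  let A := Series (fun t => d ^ t * pear_exp p VP k t (util_reward p VP k) 0 0) in
  k / (1 - d * rho1 p VP) <= A <= (k + util_slack VP) / (1 - d).
Proof.
  intros Hp Hd k A. unfold A. set (Xh := fun t => pear_exp p VP k t (util_reward p VP k) 0 0).
  destruct (rho_bounds p VP Hp) as [Hq1 [Hq2 Hq]].
  remember (rho1 p VP) as q eqn:Hqdef.
  assert (Hk : 0 < k) by (apply Rdiv_lt_0_compat; lra).
  assert (HXh : forall t, 0 <= Xh t <= k + util_slack VP)
    by (intros t; apply pear_exp_bounds; intros; apply util_reward_high_bounds; auto).
  assert (HXl : forall t, q ^ t * k <= Xh t).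
  { intros t. rewrite Hqdef, <- win3_high.
    apply (pear_exp_ge_pow _ _ _ _ (k + util_slack VP)).
    - intros a b. apply util_reward_high_bounds; auto.
    - intros a. apply util_reward_high_no_failure; auto.
    - intros a. apply pear_explore_no_failure; auto. }
  assert (Hdq : 0 <= d * q < 1) by (split; nra).
  split.
  - rewrite <- (is_series_unique _ _ (is_series_geom_scal k (d * q) Hdq)).
    apply Series_le.
    + intros t. change (pear_exp p VP k t (util_reward p VP k) 0 0) with (Xh t).
      specialize (HXh t). specialize (HXl t).
      assert (0 <= d ^ t) by (apply pow_le; lra). assert (0 <= q ^ t) by (apply pow_le; lra).
      assert (d ^ t * (q ^ t * k) <= d ^ t * Xh t) by (apply Rmult_le_compat_l; auto).
      rewrite Rpow_mult_distr. split; [|nra]. apply Rmult_le_pos; [lra|]. apply Rmult_le_pos; lra.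
    + apply (ex_series_discounted d Xh (k + util_slack VP)); auto.
      intros t; rewrite Rabs_pos_eq; apply HXh.
  - rewrite <- (is_series_unique _ _ (is_series_geom_scal (k + util_slack VP) d Hd)).
    apply Series_le.
    + intros t. change (pear_exp p VP k t (util_reward p VP k) 0 0) with (Xh t).
      specialize (HXh t). assert (0 <= d ^ t) by (apply pow_le; lra). split; nra.
    + exists ((k + util_slack VP) / (1 - d)). apply is_series_geom_scal; auto.
Qed.

Lemma high_util_close p d q C C1 A : 0 < p < 1 -> 0 <= d < 1 -> 0 <= q -> 0 <= C1 ->
  0 < 1 - q <= C * p ->
  (1 - p) / p / (1 - d * q) <= A <= ((1 - p) / p + C1) / (1 - d) ->
  Rabs (p * A - 1 / (1 - d)) <= p * ((C1 + 1) / (1 - d) + C / ((1 - d) * (1 - d))).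
Proof.
  intros Hp Hd Hq HC1 HqC [HAl HAu].
  set (a := 1 - d * q) in *. set (b := 1 - d) in *.
  assert (Hb0 : 0 < b) by (unfold b; lra).
  assert (Hab : b <= a) by (unfold a, b; nra).
  assert (Hab2 : a - b <= C * p) by (unfold a, b; nra).
  assert (HC : 0 <= C) by (destruct (Rle_lt_dec 0 C); [auto | nra]).
  assert (Hup : p * A - 1 / b <= p * C1 / b - p / b).
  { apply Rle_trans with (p * (((1 - p) / p + C1) / b) - 1 / b).
    - apply Rplus_le_compat_r, Rmult_le_compat_l; lra.
    - right. field. lra. }
  assert (Hlow : - (p / b) - p * C / (b * b) <= p * A - 1 / b).
  { apply Rle_trans with ((1 - p) / a - 1 / b).
    - assert (Hnum : 0 <= C * p * a - (1 - p) * b * (a - b)).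
      { assert (0 <= b * (a - b)) by nra.
        assert (b * (a - b) <= a * (C * p)) by nra. nra. }
      assert (0 <= (C * p * a - (1 - p) * b * (a - b)) / (a * b * b))
        by (apply Rdiv_le_0_compat; auto; apply Rmult_lt_0_compat; [apply Rmult_lt_0_compat|]; lra).
      replace ((1 - p) / a - 1 / b)
        with ((C * p * a - (1 - p) * b * (a - b)) / (a * b * b) - p / b - p * C / (b * b))
        by (field; lra).
      lra.
    - apply Rplus_le_compat_r. apply Rle_trans with (p * ((1 - p) / p / a)); [right; field; lra|].
      apply Rmult_le_compat_l; lra. }
  assert (0 <= p / b) by (apply Rdiv_le_0_compat; lra).
  assert (0 <= p * C1 / b) by (apply Rdiv_le_0_compat; nra).
  assert (0 <= p * C / (b * b)) by (apply Rdiv_le_0_compat; nra).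
  replace (p * ((C1 + 1) / b + C / (b * b))) with (p * C1 / b + p / b + p * C / (b * b))
    by (field; lra).
  apply Rabs_le. split; lra.
Qed.

Lemma util_reward_low_bounds p VP a b :
  0 <= util_reward p VP (-1) a b <= util_explore VP + util_exploit VP.
Proof.
  destruct (util_low_nonneg VP). rewrite util_reward_low.
  destruct (pear_explore p VP a b); lra.
Qed.

Lemma abs_mix_sub_le p a b u l ea eb mb : 0 <= p <= 1 ->
  Rabs (p * a - u) <= ea -> Rabs (b - l) <= eb -> Rabs b <= mb ->
  Rabs (p * a + (1 - p) * b - (u + l)) <= ea + eb + p * mb.
Proof.
  intros Hp Ha Hb Hmb. apply Rabs_le_between in Ha, Hb, Hmb.
  assert (- (p * mb) <= p * b <= p * mb) by (split; nra).
  apply Rabs_le. lra.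
Qed.

Lemma pear_util_approx VP d N p : 0 <= d < 1 -> prior_small VP N p ->
  let M := util_explore VP + util_exploit VP in
  Rabs (pear_util VP d p
        - (1 / (1 - d)
           + Series (fun t => d ^ t * stop_mix (rho2 VP) (util_explore VP) (util_exploit VP) t)))
    <= ((util_slack VP + 1) / (1 - d) + (1 + exp VP) / ((1 - d) * (1 - d)) + M / (1 - d)) * p
       + 2 * M * sqrt d ^ N / (1 - sqrt d).
Proof.
  intros Hd Hsmall M. pose proof Hsmall as [Hp _].
  set (k := (1 - p) / p).
  set (Xh := fun t => pear_exp p VP k t (util_reward p VP k) 0 0).
  set (Yl := fun t => pear_exp p VP (-1) t (util_reward p VP (-1)) 0 0).
  replace (pear_util VP d p) with (Series (fun t => d ^ t * (p * Xh t + (1 - p) * Yl t)))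
    by reflexivity.
  set (Z := stop_mix (rho2 VP) (util_explore VP) (util_exploit VP)).
  assert (HYl : forall t, Rabs (Yl t) <= M /\ Rabs (Z t) <= M).
  { intros t. destruct (util_low_nonneg VP), (rho2_bounds VP).
    assert (0 <= Yl t <= M) by (apply pear_exp_bounds, util_reward_low_bounds).
    assert (0 <= Z t <= M) by (apply stop_mix_bounds; unfold M; lra).
    rewrite !Rabs_pos_eq; lra. }
  assert (HXh : forall t, Rabs (Xh t) <= k + util_slack VP).
  { intros t. assert (0 <= Xh t <= k + util_slack VP)
      by (apply pear_exp_bounds; intros; apply util_reward_high_bounds; auto).
    rewrite Rabs_pos_eq; lra. }
  rewrite (Series_discounted_mix d Xh Yl p (k + util_slack VP) M) by (auto; apply HYl).
  destruct (rho_bounds p VP Hp) as [Hq1 [Hq2 Hq3]].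
  pose proof (sqrt_lt_1_of_lt_1 d Hd).
  eapply Rle_trans;
    [apply (abs_mix_sub_le _ _ _ _ _
              (p * ((util_slack VP + 1) / (1 - d) + (1 + exp VP) / ((1 - d) * (1 - d))))
              (0 / (1 - d) + 2 * M * sqrt d ^ N / (1 - sqrt d)) (M / (1 - d)));
     [lra | | |]
    | right; field; repeat split; lra].
  - apply (high_util_close p d (rho1 p VP) (1 + exp VP) (util_slack VP) _ Hp Hd ltac:(lra)
             (util_slack_nonneg VP) (one_sub_rho1_le p VP Hp)
             (Series_util_high_bounds p VP d Hp Hd)).
  - apply (Series_discounted_close d Yl Z N 0 M); auto.
    intros t Ht. unfold Yl, Z.
    rewrite (pear_exp_low_type p VP N _ (util_explore VP) (util_exploit VP)) by
      (auto; intros; apply util_reward_low).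
    rewrite Rminus_diag, Rabs_R0. lra.
  - apply Series_discounted_le; auto. apply HYl.
Qed.

Lemma filterlim_at_right_0_of_bound (g : R -> R) l K M s : 0 <= K -> 0 <= M -> 0 <= s < 1 ->
  (forall N : nat, exists p1, 0 < p1 /\
     forall p, 0 < p < p1 -> Rabs (g p - l) <= K * p + M * s ^ N) ->
  filterlim g (at_right 0) (locally l).
Proof.
  intros HK HM Hs H. apply filterlim_locally. intros [eps He]. simpl.
  destruct (pow_lt_1_zero s ltac:(rewrite Rabs_pos_eq; lra) (eps / (2 * (M + 1))))
    as [N HN]; [apply Rdiv_lt_0_compat; lra|].
  destruct (H N) as [p1 [Hp1 Hb]].
  assert (HsN := HN N (le_n N)). rewrite Rabs_pos_eq in HsN by (apply pow_le; lra).
  assert (HMs : M * s ^ N < eps / 2).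
  { apply Rle_lt_trans with ((M + 1) * s ^ N); [apply Rmult_le_compat_r; [apply pow_le|]; lra|].
    apply Rlt_le_trans with ((M + 1) * (eps / (2 * (M + 1)))); [apply Rmult_lt_compat_l; lra|].
    right; field; lra. }
  set (d0 := Rmin p1 (eps / (2 * (K + 1)))).
  assert (Hd0 : 0 < d0 <= p1 /\ d0 <= eps / (2 * (K + 1)))
    by (unfold d0; repeat split; [apply Rmin_glb_lt | apply Rmin_l | apply Rmin_r];
        try apply Rdiv_lt_0_compat; lra).
  exists (mkposreal d0 (proj1 (proj1 Hd0))). intros y Hy Hy0. simpl in Hy.
  unfold ball in Hy; simpl in Hy; unfold AbsRing_ball, abs, minus, plus, opp in Hy; simpl in Hy.
  rewrite Ropp_0, Rplus_0_r, Rabs_pos_eq in Hy by lra.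
  assert (HKy : K * y < eps / 2).
  { apply Rle_lt_trans with ((K + 1) * y); [nra|].
    apply Rlt_le_trans with ((K + 1) * (eps / (2 * (K + 1)))); [apply Rmult_lt_compat_l; lra|].
    right; field; lra. }
  unfold ball; simpl; unfold AbsRing_ball, abs, minus, plus, opp; simpl.
  specialize (Hb y ltac:(lra)). unfold Rminus in Hb. lra.
Qed.

Lemma rho2_eq VP : rho2 VP = / (1 + exp 1 + exp (VP + 1)).
Proof.
  unfold rho2. rewrite exp_plus. generalize (exp_pos 1) (exp_pos VP); intros.
  replace (exp (-1)) with (/ exp 1) by (rewrite <- exp_Ropp; reflexivity).
  field. split; nra.
Qed.

Lemma Series_stop_mix_rho2 VP d E X : 0 <= d < 1 ->
  Series (fun t => d ^ t * stop_mix (rho2 VP) E X t)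
  = 1 / (1 - d * rho2 VP) * E + 1 / (1 - d) * (d * (1 - rho2 VP) / (1 - d * rho2 VP)) * X.
Proof.
  intros Hd. apply is_series_unique, is_series_stop_mix; auto.
  destruct (rho2_bounds VP). lra.
Qed.

Lemma pear_eng_limit VP d : 0 <= d < 1 ->
  filterlim (pear_eng VP d) (at_right 0)
    (locally (1 / (1 - d * rho2 VP) * eng_explore VP
              + 1 / (1 - d) * (d * (1 - rho2 VP) / (1 - d * rho2 VP)) * eng_exploit VP)).
Proof.
  intros Hd. rewrite <- Series_stop_mix_rho2 by auto.
  pose proof (sqrt_lt_1_of_lt_1 d Hd).
  apply (filterlim_at_right_0_of_bound _ _ (1 / (1 - d)) (2 / (1 - sqrt d)) (sqrt d));
    try (apply Rdiv_le_0_compat; lra); auto.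
  intros N. destruct (prior_small_eventually VP N) as [p1 [Hp1 Hsmall]].
  exists p1. split; auto. intros p Hp.
  eapply Rle_trans; [apply (pear_eng_approx VP d N p Hd (Hsmall p Hp))|].
  right. field. lra.
Qed.

Lemma pear_util_limit VP d : 0 <= d < 1 ->
  filterlim (pear_util VP d) (at_right 0)
    (locally (1 / (1 - d) + 1 / (1 - d * rho2 VP) * util_explore VP
              + 1 / (1 - d) * (d * (1 - rho2 VP) / (1 - d * rho2 VP)) * util_exploit VP)).
Proof.
  intros Hd. rewrite Rplus_assoc, <- Series_stop_mix_rho2 by auto.
  pose proof (sqrt_lt_1_of_lt_1 d Hd).
  pose proof (util_slack_nonneg VP). pose proof (exp_pos VP). destruct (util_low_nonneg VP).
  set (M := util_explore VP + util_exploit VP).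
  assert (0 < (1 - d) * (1 - d)) by nra.
  apply (filterlim_at_right_0_of_bound _ _
    ((util_slack VP + 1) / (1 - d) + (1 + exp VP) / ((1 - d) * (1 - d)) + M / (1 - d))
    (2 * M / (1 - sqrt d)) (sqrt d)); auto.
  - repeat apply Rplus_le_le_0_compat; apply Rdiv_le_0_compat; unfold M; lra.
  - apply Rdiv_le_0_compat; unfold M; lra.
  - intros N. destruct (prior_small_eventually VP N) as [p1 [Hp1 Hsmall]].
    exists p1. split; auto. intros p Hp.
    eapply Rle_trans; [apply (pear_util_approx VP d N p Hd (Hsmall p Hp))|].
    right. unfold M. field. lra.
Qed.

Theorem theorem2 (VP delta : R) (hVP : 0 <= VP) (hd0 : 0 <= delta) (hd1 : delta < 1) :
  let rho := / (1 + exp 1 + exp (VP + 1)) in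
  filterlim (fun p => pear_eng VP delta p) (at_right 0)
    (locally (1 / (1 - delta * rho) * ((exp VP + exp (-1)) / (1 + exp VP + exp (-1)))
              + 1 / (1 - delta) * (delta * (1 - rho) / (1 - delta * rho))
                * (2 * exp VP / (1 + 2 * exp VP))))
  /\
  filterlim (fun p => pear_util VP delta p) (at_right 0)
    (locally (1 / (1 - delta)
              + 1 / (1 - delta * rho) * ln (1 + exp (-1) + exp VP)
              + 1 / (1 - delta) * (delta * (1 - rho) / (1 - delta * rho))
                * ln (1 + 2 * exp VP))).
Proof.
  intros rho. unfold rho. rewrite <- rho2_eq. split.
  - exact (pear_eng_limit VP delta ltac:(lra)).
  - exact (pear_util_limit VP delta ltac:(lra)).
Qed.
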